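(* Let $R$ be a commutative ring and $M$ a semisimple $R$-module. Let $B$ be the set of all maximal second submodules of $M$, and assume that $Ann(M)\neq\bigcap_{K\in B\setminus\{N\}}Ann(K)$ for every $N\in B$. Then the following are equivalent: (1) $M$ is a multiplication module; (2) every PS-hollow submodule of $M$ is simple; (3) every second submodule of $M$ is simple; (4) $M$ is a comultiplication module.
   Context: A submodule $N\neq 0$ of $M$ is second iff for every ideal $I\leq R$, $IN=N$ or $IN=0$; maximal second submodules are those maximal w.r.t. inclusion among second submodules. An $R$-submodule $N\leq M$ is PS-hollow iff for every ideal $I\leq R$ and every submodule $L\leq M$: $N\subseteq IM+L$ implies $N\subseteq IM$ or $N\subseteq L$. $M$ is a multiplication module iff every submodule of $M$ is of the form $IM$ for some ideal $I\leq R$. $M$ is a comultiplication module iff $K=(0:_M(0:_R K))$ for every submodule $K\leq M$. $Ann(K)=(0:_R K)$. *)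

From HB Require Import structures.
From mathcomp Require Import all_boot all_order all_algebra.
Set Implicit Arguments. Unset Strict Implicit. Unset Printing Implicit Defensive.
Import GRing.Theory.
Local Open Scope ring_scope.

Section ModDefs.
Variables (R : comNzRingType) (M : lmodType R).

Definition pset_eq {T : Type} (A B : T -> Prop) := forall x, A x <-> B x.
Definition pset_sub {T : Type} (A B : T -> Prop) := forall x, A x -> B x.

Definition fullM : M -> Prop := fun _ => True.
Definition zeroM : M -> Prop := fun x => x = 0.

Definition is_submodule (N : M -> Prop) : Prop :=
  [/\ N 0, (forall x y, N x -> N y -> N (x + y)) & (forall (r : R) x, N x -> N (r *: x))].

Definition is_ideal (I : R -> Prop) : Prop :=
  [/\ I 0, (forall a b, I a -> I b -> I (a + b)) & (forall r a, I a -> I (r * a))].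

Definition ideal_mul (I : R -> Prop) (N : M -> Prop) : M -> Prop :=
  fun x => exists s : seq (R * M),
    (forall p, p \in s -> I p.1 /\ N p.2) /\ x = \sum_(p <- s) p.1 *: p.2.

Definition sum_sub (A B : M -> Prop) : M -> Prop :=
  fun x => exists a b, A a /\ B b /\ x = a + b.

Definition Ann (K : M -> Prop) : R -> Prop := fun r => forall x, K x -> r *: x = 0.

Definition annM (J : R -> Prop) : M -> Prop := fun x => forall r, J r -> r *: x = 0.

Definition nonzero (N : M -> Prop) : Prop := exists x, N x /\ x <> 0.

Definition is_simple_sub (N : M -> Prop) : Prop :=
  [/\ is_submodule N, nonzero N &
    forall L, is_submodule L -> pset_sub L N -> pset_eq L zeroM \/ pset_eq L N].

Definition semisimple : Prop :=
  forall N, is_submodule N -> exists L, is_submodule L /\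
    pset_eq (fun x => N x /\ L x) zeroM /\ pset_eq (sum_sub N L) fullM.

Definition is_second (N : M -> Prop) : Prop :=
  [/\ is_submodule N, nonzero N &
    forall I, is_ideal I -> pset_eq (ideal_mul I N) N \/ pset_eq (ideal_mul I N) zeroM].

Definition is_max_second (N : M -> Prop) : Prop :=
  is_second N /\ forall K, is_second K -> pset_sub N K -> pset_eq K N.

Definition is_PS_hollow (N : M -> Prop) : Prop :=
  [/\ is_submodule N, nonzero N &
    forall I L, is_ideal I -> is_submodule L ->
      pset_sub N (sum_sub (ideal_mul I fullM) L) ->
      pset_sub N (ideal_mul I fullM) \/ pset_sub N L].

Definition multiplication_module : Prop :=
  forall N, is_submodule N -> exists I, is_ideal I /\ pset_eq N (ideal_mul I fullM).

Definition comultiplication_module : Prop :=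
  forall K, is_submodule K -> pset_eq K (annM (Ann K)).

Definition Ann_B_minus (N : M -> Prop) : R -> Prop :=
  fun r => forall K, is_max_second K -> ~ pset_eq K N -> Ann K r.

End ModDefs.

(* In a semisimple module every submodule is a direct summand and every nonzero
   submodule contains a simple one.  If [I] kills a summand [E], then [I M] lies in a
   complement of [E]; this alone yields (1) => (3), (4) => (3) and "second implies
   PS-hollow", hence (2) => (3).
   Conversely, once every second submodule is simple, the simple submodules are
   maximal second, and the hypothesis on annihilators gives for each simple [S]
   a scalar [r] that kills every other simple submodule, hence every submodule meeting
   [S] trivially, but not [S].  With such separating scalars, a complement [C] of [K]
   gives [K = Ann(C) M] and [K = (0 :_M Ann K)]; and if [S] is a simple submodule of a
   PS-hollow [N] with complement [C], the scalar with [r C = 0] has [r M = S], so that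
   [N <= r M + C] forces [N <= S]. *)

From HB Require Import structures.
From mathcomp Require Import all_boot all_order all_algebra.
From mathcomp Require Import classical_sets.
From Stdlib Require Import Classical.
Set Implicit Arguments. Unset Strict Implicit. Unset Printing Implicit Defensive.
Import GRing.Theory.
Local Open Scope ring_scope.

Section Submodules.
Variables (R : comNzRingType) (M : lmodType R).
Implicit Types (N L K C D E A Q S T : M -> Prop) (I : R -> Prop).
Local Notation zeroM := (@zeroM R M).
Local Notation fullM := (@fullM R M).

Definition disjoint_sub A B := forall x : M, A x -> B x -> x = 0.

Definition is_complement N C :=
  [/\ is_submodule C, disjoint_sub N C & forall x, exists a c, [/\ N a, C c & x = a + c]].

Definition cyclic_sub (v : M) : M -> Prop := fun y => exists a : R, y = a *: v.

Definition principal_ideal (r : R) : R -> Prop := fun a => exists b, a = b * r.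

Lemma submodule0 N : is_submodule N -> N 0.
Proof. by case. Qed.

Lemma submoduleD N x y : is_submodule N -> N x -> N y -> N (x + y).
Proof. by case=> _ hD _; apply: hD. Qed.

Lemma submoduleZ N (r : R) x : is_submodule N -> N x -> N (r *: x).
Proof. by case=> _ _ hZ; apply: hZ. Qed.

Lemma submoduleN N x : is_submodule N -> N x -> N (- x).
Proof. by move=> hN Nx; rewrite -scaleN1r; apply: submoduleZ. Qed.

Lemma submoduleB N x y : is_submodule N -> N x -> N y -> N (x - y).
Proof. by move=> hN Nx Ny; apply: submoduleD => //; apply: submoduleN. Qed.

Lemma submoduleDl N x y : is_submodule N -> N x -> N (x + y) -> N y.
Proof. by move=> hN Nx Nxy; rewrite -(addKr x y); apply: submoduleD => //; apply: submoduleN. Qed.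

Lemma zero_submodule : is_submodule zeroM.
Proof. by split=> [|x y -> ->|r x ->]; rewrite /zeroM ?addr0 ?scaler0. Qed.

Lemma submoduleI N L : is_submodule N -> is_submodule L ->
  is_submodule (fun x => N x /\ L x).
Proof.
move=> hN hL; split; first by split; apply: submodule0.
- by move=> x y [Nx Lx] [Ny Ly]; split; apply: submoduleD.
- by move=> r x [Nx Lx]; split; apply: submoduleZ.
Qed.

Lemma sum_submodule N L : is_submodule N -> is_submodule L -> is_submodule (sum_sub N L).
Proof.
move=> hN hL; split.
- by exists 0, 0; rewrite addr0; split; [exact: submodule0|split; [exact: submodule0|]].
- move=> _ _ [a [b [Na [Lb ->]]]] [a' [b' [Na' [Lb' ->]]]].
  exists (a + a'), (b + b'); rewrite addrACA.
  by split; [apply: submoduleD|split; [apply: submoduleD|]].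
- move=> r _ [a [b [Na [Lb ->]]]]; exists (r *: a), (r *: b); rewrite scalerDr.
  by split; [apply: submoduleZ|split; [apply: submoduleZ|]].
Qed.

Lemma sum_subl N L x : is_submodule L -> N x -> sum_sub N L x.
Proof. by move=> hL Nx; exists x, 0; rewrite addr0; split; [|split; first exact: submodule0]. Qed.

Lemma cyclic_submodule v : is_submodule (cyclic_sub v).
Proof.
split.
- by exists 0; rewrite scale0r.
- by move=> _ _ [a ->] [b ->]; exists (a + b); rewrite scalerDl.
- by move=> r _ [a ->]; exists (r * a); rewrite scalerA.
Qed.

Lemma cyclic_sub_id v : cyclic_sub v v.
Proof. by exists 1; rewrite scale1r. Qed.

Lemma cyclic_sub_min N v : is_submodule N -> N v -> pset_sub (cyclic_sub v) N.
Proof. by move=> hN Nv _ [a ->]; apply: submoduleZ. Qed.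

Lemma Ann_ideal K : is_ideal (Ann K).
Proof.
split.
- by move=> x _; rewrite scale0r.
- by move=> a b ha hb x Kx; rewrite scalerDl ha // hb // addr0.
- by move=> r a ha x Kx; rewrite -scalerA ha // scaler0.
Qed.

Lemma principal_ideal_ideal r : is_ideal (principal_ideal r).
Proof.
split.
- by exists 0; rewrite mul0r.
- by move=> _ _ [a ->] [b ->]; exists (a + b); rewrite mulrDl.
- by move=> s _ [b ->]; exists (s * b); rewrite mulrA.
Qed.

Lemma principal_ideal_id r : principal_ideal r r.
Proof. by exists 1; rewrite mul1r. Qed.

Lemma principal_ideal_min I r : is_ideal I -> I r -> pset_sub (principal_ideal r) I.
Proof. by case=> _ _ hI Ir _ [b ->]; apply: hI. Qed.

Lemma ideal_mulZ I N r x : I r -> N x -> ideal_mul I N (r *: x).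
Proof.
move=> Ir Nx; exists [:: (r, x)]; rewrite big_seq1; split=> // p.
by rewrite inE => /eqP ->.
Qed.

Lemma ideal_mul_min I N N' : is_submodule N' ->
  (forall r x, I r -> N x -> N' (r *: x)) -> pset_sub (ideal_mul I N) N'.
Proof.
move=> hN' hIN _ [s [hs ->]]; elim: s hs => [|p s IHs] hs.
  by rewrite big_nil; apply: submodule0.
rewrite big_cons; apply: submoduleD => //.
- by have [] := hs p (mem_head p s); apply: hIN.
- by apply: IHs => q qs; apply: hs; rewrite inE qs orbT.
Qed.

Lemma ideal_mulS I N N' : pset_sub N N' -> pset_sub (ideal_mul I N) (ideal_mul I N').
Proof.
move=> NN' _ [s [hs ->]]; exists s; split=> // p /hs [Ip Np].
by split=> //; apply: NN'.
Qed.

Lemma ideal_mul_submodule I N : is_ideal I -> is_submodule (ideal_mul I N).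
Proof.
case=> _ _ hI; split.
- by exists [::]; rewrite big_nil.
- move=> _ _ [s [hs ->]] [t [ht ->]]; exists (s ++ t); rewrite big_cat; split=> // p.
  by rewrite mem_cat => /orP [/hs|/ht].
- move=> r _ [s [hs ->]]; exists [seq (r * p.1, p.2) | p <- s]; split.
  + by move=> _ /mapP [q /hs [Iq Nq] ->]; split=> //; apply: hI.
  + by rewrite big_map scaler_sumr; apply: eq_bigr => p _; rewrite scalerA.
Qed.

Lemma ideal_mul_sub I N : is_submodule N -> pset_sub (ideal_mul I N) N.
Proof. by move=> hN; apply: ideal_mul_min => // r x _; apply: submoduleZ. Qed.

Lemma pset_eq_zeroM L : is_submodule L -> pset_sub L zeroM -> pset_eq L zeroM.
Proof. by move=> hL L0 x; split=> [/L0|->] //; apply: submodule0. Qed.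

Lemma zeroM_or_nonzero L : pset_sub L zeroM \/ nonzero L.
Proof.
case: (classic (nonzero L)) => [|zL]; [by right|left => x Lx].
by apply: NNPP => x0; apply: zL; exists x.
Qed.

Lemma simple_second S : is_simple_sub S -> is_second S.
Proof.
case=> hS nzS simS; split=> // I hI.
by case: (simS _ (ideal_mul_submodule S hI) (ideal_mul_sub hS)); [right|left].
Qed.

Lemma is_complement_sym N C : is_submodule N -> is_complement N C -> is_complement C N.
Proof.
move=> hN [hC NC dec]; split=> // [x Cx Nx|x]; first exact: NC.
by have [a [c [Na Cc ->]]] := dec x; exists c, a; rewrite addrC.
Qed.

Lemma max_submodule_avoiding N x : is_submodule N -> x <> 0 ->
  exists A, [/\ is_submodule A, pset_sub A N, ~ A x &
    forall B, is_submodule B -> pset_sub A B -> pset_sub B N -> ~ B x -> pset_sub B A].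
Proof.
move=> hN x0.
pose P (A : set M) := [/\ pset_sub A N, ~ A x,
  (forall u v, A u -> A v -> A (u + v)) & (forall (r : R) u, A u -> A (r *: u))].
have [A [[AN Ax AD AZ] Amax]] : exists A, P A /\ forall B, proper A B -> ~ P B.
  apply: Zorn_bigcup => F FP Ftot; split.
  - by move=> y [X FX Xy]; have [+ _ _ _] := FP X FX; apply.
  - by move=> [X FX Xx]; have [_ + _ _] := FP X FX; apply.
  - move=> u v [X FX Xu] [Y FY Yv]; have [XY|YX] := Ftot X Y FX FY.
    + by exists Y => //; have [_ _ + _] := FP Y FY; apply=> //; apply: XY.
    + by exists X => //; have [_ _ + _] := FP X FX; apply=> //; apply: YX.
  - by move=> r u [X FX Xu]; exists X => //; have [_ _ _ +] := FP X FX; apply.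
(* [P] omits [A 0] so that the union of the empty chain qualifies; [0] is added back here. *)
exists (fun y => A y \/ y = 0); split.
- split; [by right| |].
  + by move=> u v [Au|->] [Av|->]; rewrite ?addr0 ?add0r; by [left; apply: AD|left|left|right].
  + by move=> r u [Au|->]; [left; apply: AZ|right; rewrite scaler0].
- by move=> y [/AN|->] //; apply: submodule0.
- by case.
- move=> B [B0 BD BZ] AB BN Bx y By; left; apply: NNPP => Ay.
  have AsubB : pset_sub A B by move=> z Az; apply: AB; left.
  by apply: (Amax B); split=> // /(_ y By).
Qed.

End Submodules.

Arguments zero_submodule {R M}.

Section Semisimple.
Variables (R : comNzRingType) (M : lmodType R).
Implicit Types (N L K C D E A Q S T : M -> Prop) (I : R -> Prop).
Local Notation zeroM := (@zeroM R M).
Local Notation fullM := (@fullM R M).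
Hypothesis ssM : semisimple M.

Lemma complement_exists N : is_submodule N -> exists C, is_complement N C.
Proof.
move=> hN; have [C [hC [NC0 NC]]] := ssM hN; exists C; split=> // [x Nx Cx|x].
  exact/(NC0 x).1.
by have [a [c [Na [Cc ->]]]] := (NC x).2 Logic.I; exists a, c.
Qed.

Lemma relative_complement_exists N D : is_submodule N -> is_submodule D -> pset_sub D N ->
  exists E, [/\ is_submodule E, pset_sub E N, disjoint_sub D E &
    forall x, N x -> exists d e, [/\ D d, E e & x = d + e]].
Proof.
move=> hN hD DN; have [C [hC DC dec]] := complement_exists hD.
exists (fun y => N y /\ C y); split=> [|y []//|x Dx [_ Cx]|x Nx]; first exact: submoduleI.
  exact: DC.
have [d [c [Dd Cc xdc]]] := dec x; exists d, c; split=> //; split=> //.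
by apply: (submoduleDl hN (DN d Dd)); rewrite -xdc.
Qed.

Lemma complement_containing E L : is_submodule E -> is_submodule L -> disjoint_sub E L ->
  exists C, is_complement E C /\ pset_sub L C.
Proof.
move=> hE hL EL; have [C' [hC' EL_C' dec]] := complement_exists (sum_submodule hE hL).
exists (sum_sub L C'); split=> [|l Ll]; last exact: sum_subl.
split=> [|x Ex [l [c' [Ll [Cc' xlc']]]]|m]; first exact: sum_submodule.
  have c'0 : c' = 0.
    apply: EL_C' => //; exists x, (- l); split=> //; split; first exact: submoduleN.
    by rewrite xlc' addrC addKr.
  by apply: EL; rewrite // xlc' c'0 addr0.
have [_ [c' [[e [l [Ee [Ll ->]]]] Cc' ->]]] := dec m.
by exists e, (l + c'); rewrite addrA; split=> //; exists l, c'.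
Qed.

Lemma ideal_mul_sub_complement E C I : is_complement E C -> pset_sub I (Ann E) ->
  pset_sub (ideal_mul I fullM) C.
Proof.
move=> [hC _ dec] IE; apply: ideal_mul_min => // r m Ir _.
have [e [c [Ee Cc ->]]] := dec m.
by rewrite scalerDr (IE r Ir e Ee) add0r; apply: submoduleZ.
Qed.

Lemma sub_ideal_mul_sum_eq0 E L I : is_submodule E -> is_submodule L -> disjoint_sub E L ->
  pset_sub I (Ann E) -> pset_sub E (sum_sub (ideal_mul I fullM) L) -> pset_sub E zeroM.
Proof.
move=> hE hL EL IE EIL x Ex.
have [C [CE LC]] := complement_containing hE hL EL.
have [hC EC _] := CE; have IMC := ideal_mul_sub_complement CE IE.
apply: EC => //; have [a [l [IMa [Ll ->]]]] := EIL x Ex.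
by apply: submoduleD => //; [apply: IMC | apply: LC].
Qed.

Lemma sub_ideal_mul_eq0 E I : is_submodule E -> pset_sub I (Ann E) ->
  pset_sub E (ideal_mul I fullM) -> pset_sub E zeroM.
Proof.
move=> hE IE EI; apply: (sub_ideal_mul_sum_eq0 hE zero_submodule _ IE) => [x _ //|x Ex].
by apply: sum_subl; [exact: zero_submodule | apply: EI].
Qed.

Lemma simple_of_mem_nonzero Q c : is_submodule Q -> Q c -> c <> 0 ->
  (forall L, is_submodule L -> pset_sub L Q -> nonzero L -> L c) -> is_simple_sub Q.
Proof.
move=> hQ Qc c0 QcL; split=> //; first by exists c.
move=> L hL LQ; have [L0|nzL] := zeroM_or_nonzero L; first by left; apply: pset_eq_zeroM.
right=> y; split=> [/LQ//|Qy].
have [E [hE EQ LE dec]] := relative_complement_exists hQ hL LQ.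
have E0 : pset_sub E zeroM.
  move=> e Ee; apply: NNPP => e0; apply: c0; apply: LE; first exact: QcL.
  by apply: QcL => //; exists e.
by have [d [e [Ld /E0 -> ->]]] := dec y Qy; rewrite addr0.
Qed.

(* If [A] is maximal in [N] avoiding [x = a + c] with [c] in a complement [C] of [A],
   then [c] lies in every nonzero submodule of [N] meet [C], which is therefore simple. *)
Lemma exists_simple_sub N x : is_submodule N -> N x -> x <> 0 ->
  exists S, is_simple_sub S /\ pset_sub S N.
Proof.
move=> hN Nx x0; have [A [hA AN Ax Amax]] := max_submodule_avoiding hN x0.
have [C [hC AC dec]] := complement_exists hA; have [a [c [Aa Cc xac]]] := dec x.
have Nc : N c by apply: (submoduleDl hN (AN a Aa)); rewrite -xac.
have c0 : c <> 0 by move=> c0; apply: Ax; rewrite xac c0 addr0.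
exists (fun y => N y /\ C y); split=> [|y []//].
apply: (simple_of_mem_nonzero (submoduleI hN hC) (conj Nc Cc) c0) => L hL LNC [y [Ly y0]].
have LC : pset_sub L C by move=> z /LNC [].
have [a' [l [Aa' [Ll xal]]]] : sum_sub A L x.
  apply: NNPP => ALx; apply: y0; apply: AC; last exact: LC Ly.
  have AL_N : pset_sub (sum_sub A L) N.
    by move=> _ [u [v [Au [Lv ->]]]]; apply: submoduleD => //; [apply: AN | case: (LNC v Lv)].
  apply: (Amax _ (sum_submodule hA hL) _ AL_N ALx) => [z Az|]; first exact: sum_subl.
  by exists 0, y; rewrite add0r; split; first exact: submodule0.
have : c - l = 0.
  apply: AC; last by apply: submoduleB => //; apply: LC.
  by apply: (submoduleDl hA Aa); rewrite addrA -xac xal addrK.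
by move/subr0_eq ->.
Qed.

Lemma Ann_of_simple_subs K r : is_submodule K ->
  (forall T, is_simple_sub T -> pset_sub T K -> Ann T r) -> Ann K r.
Proof.
move=> hK AnnT k Kk; apply: NNPP => rk0.
have [T [sT Trk]] := exists_simple_sub (cyclic_submodule (r *: k)) (cyclic_sub_id _) rk0.
have [hT [t [Tt t0]] _] := sT.
have TK : pset_sub T K by move=> y /Trk; apply: cyclic_sub_min => //; apply: submoduleZ.
have rT : Ann T r by apply: AnnT.
apply: t0; apply: (sub_ideal_mul_eq0 (I := principal_ideal r) hT _ _ Tt).
- exact: principal_ideal_min (Ann_ideal T) rT.
- move=> _ /Trk [a ->]; rewrite scalerA mulrC -scalerA.
  exact: ideal_mulZ (principal_ideal_id r) _.
Qed.

Lemma multiplication_second_simple : multiplication_module M ->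
  forall N, is_second N -> is_simple_sub N.
Proof.
move=> mulM N [hN nzN secN]; split=> // L hL LN.
have [J [hJ LJ]] := mulM L hL.
case: (secN J hJ) => [JN|JN0].
- right=> y; split=> [/LN//|Ny]; apply/(LJ y).2.
  by apply: (ideal_mulS (N := N)) => //; apply/(JN y).2.
- left; apply: pset_eq_zeroM => //; apply: (sub_ideal_mul_eq0 (I := J) hL) => [r Jr x Lx|x Lx].
  + exact/(JN0 (r *: x)).1/ideal_mulZ/LN.
  + exact/(LJ x).1.
Qed.

Lemma comultiplication_second_simple : comultiplication_module M ->
  forall N, is_second N -> is_simple_sub N.
Proof.
move=> coM N [hN nzN secN]; split=> // L hL LN.
case: (secN _ (Ann_ideal L)) => [JN|JN0].
- left; apply: pset_eq_zeroM => //; apply: (sub_ideal_mul_eq0 (I := Ann L) hL) => // x Lx.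
  by apply: (ideal_mulS (N := N)) => //; apply/(JN x).2/LN.
- right=> y; split=> [/LN//|Ny]; apply/(coM L hL y).2 => r Jr.
  exact/(JN0 (r *: y)).1/ideal_mulZ.
Qed.

Lemma second_PS_hollow N : is_second N -> is_PS_hollow N.
Proof.
move=> [hN nzN secN]; split=> // I L hI hL NIL.
case: (secN I hI) => [IN|IN0]; [left | right].
  by move=> y Ny; apply: (ideal_mulS (N := N)) => //; apply/(IN y).2.
have NL_N : pset_sub (fun y => N y /\ L y) N by move=> y [].
have [E [hE EN NLE dec]] := relative_complement_exists hN (submoduleI hN hL) NL_N.
have E0 : pset_sub E zeroM.
  apply: (sub_ideal_mul_sum_eq0 (I := I) hE hL) => [x Ex Lx|r Ir e Ee|x Ex].
  - exact: NLE (conj (EN x Ex) Lx) Ex.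
  - by apply/(IN0 (r *: e)).1; apply: ideal_mulZ => //; apply: EN.
  - exact/NIL/EN.
by move=> y /dec [d [e [[_ Ld] /E0 -> ->]]]; rewrite addr0.
Qed.

End Semisimple.

Section Separation.
Variables (R : comNzRingType) (M : lmodType R).
Implicit Types (N L K C S T : M -> Prop).
Local Notation fullM := (@fullM R M).
Hypothesis ssM : semisimple M.
Hypothesis second_simple : forall N, is_second N -> is_simple_sub N.
Hypothesis Ann_B_strict : forall N, is_max_second N -> ~ pset_eq (Ann fullM) (Ann_B_minus N).

Lemma simple_max_second S : is_simple_sub S -> is_max_second S.
Proof.
move=> sS; split=> [|K /second_simple [hK _ simK] SK]; first exact: simple_second.
have [hS [s [Ss s0]] _] := sS.
case: (simK S hS SK) => [S0|eSK]; first by case: s0; apply/(S0 s).1.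
by move=> y; split=> /(eSK y).
Qed.

Lemma separating_scalar S : is_simple_sub S ->
  exists r, (forall T, is_simple_sub T -> ~ pset_eq T S -> Ann T r) /\ ~ Ann S r.
Proof.
move=> sS; have [r [rB rM]] : exists r, Ann_B_minus S r /\ ~ Ann fullM r.
  apply: NNPP => nr; apply: (Ann_B_strict (simple_max_second sS)) => r.
  split=> [rM K _ _ x _|rB]; first exact: rM.
  by apply: NNPP => rM; apply: nr; exists r.
have rT : forall T, is_simple_sub T -> ~ pset_eq T S -> Ann T r.
  by move=> T /simple_max_second; apply: rB.
exists r; split=> // rS; apply/rM/(Ann_of_simple_subs ssM (K := fullM)) => // T sT _.
have [eTS|nTS] := classic (pset_eq T S); last exact: rT.
by move=> x /(eTS x) /rS.
Qed.

Lemma separating_scalar_disjoint S C : is_simple_sub S -> is_submodule C ->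
  disjoint_sub S C -> exists r, Ann C r /\ ~ Ann S r.
Proof.
move=> sS hC SC; have [r [rT rS]] := separating_scalar sS; exists r; split=> //.
apply: (Ann_of_simple_subs ssM hC) => T sT TC; apply: rT => // eTS.
have [_ [s [Ss s0]] _] := sS; apply/s0/SC => //; apply/TC/(eTS s).2/Ss.
Qed.

Lemma comultiplication_of_second_simple : comultiplication_module M.
Proof.
move=> K hK x; split=> [Kx r rK|xK]; first exact: rK.
have [C [hC KC dec]] := complement_exists ssM hK; have [k [c [Kk Cc xkc]]] := dec x.
have cK : forall r, Ann K r -> r *: c = 0.
  by move=> r rK; move: (xK r rK); rewrite xkc scalerDr rK // add0r.
suff c0 : c = 0 by rewrite xkc c0 addr0.
apply: NNPP => c0.
have [S [sS Sc]] := exists_simple_sub ssM (cyclic_submodule c) (cyclic_sub_id c) c0.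
have SK : disjoint_sub S K.
  by move=> y /Sc Scy Ky; apply: KC => //; apply: (cyclic_sub_min hC Cc).
have [r [rK rS]] := separating_scalar_disjoint sS hK SK.
by apply: rS => _ /Sc [a ->]; rewrite scalerA mulrC -scalerA cK // scaler0.
Qed.

Lemma multiplication_of_second_simple : multiplication_module M.
Proof.
move=> K hK; have [C KC] := complement_exists ssM hK; have [hC KC0 _] := KC.
exists (Ann C); split; first exact: Ann_ideal.
have AnnC_K := ideal_mul_sub_complement (is_complement_sym hK KC) (fun r rC => rC).
move=> k; split=> [Kk|/AnnC_K//].
have hQ := ideal_mul_submodule fullM (Ann_ideal C).
have [Q' [hQ' QQ' decQ]] := complement_exists ssM hQ; have [q [q' [Qq Qq' kqq']]] := decQ k.
suff q'0 : q' = 0 by rewrite kqq' q'0 addr0.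
apply: NNPP => q'0.
have Kq' : K q' by apply: (submoduleDl hK (AnnC_K q Qq)); rewrite -kqq'.
have [S [sS Sq']] := exists_simple_sub ssM (cyclic_submodule q') (cyclic_sub_id q') q'0.
have SC : disjoint_sub S C.
  by move=> y /Sq' Sy Cy; apply: KC0 => //; apply: (cyclic_sub_min hK Kq').
have [r [rC rS]] := separating_scalar_disjoint sS hC SC.
apply: rS => s /Sq' Sq's; apply: QQ'; first exact: ideal_mulZ.
by apply: submoduleZ => //; apply: (cyclic_sub_min hQ' Qq').
Qed.

Lemma PS_hollow_simple_of_second_simple N : is_PS_hollow N -> is_simple_sub N.
Proof.
move=> [hN nzN PS]; split=> // L hL LN.
have [L0|[y [Ly y0]]] := zeroM_or_nonzero L; first by left; apply: pset_eq_zeroM.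
right; have [S [sS SL]] := exists_simple_sub ssM hL Ly y0.
have [hS [s [Ss s0]] _] := sS.
have [C SC] := complement_exists ssM hS; have [hC SC0 dec] := SC.
have [r [rC rS]] := separating_scalar_disjoint sS hC SC0.
pose I := principal_ideal r; have hI : is_ideal I := principal_ideal_ideal r.
have IMS : pset_sub (ideal_mul I fullM) S.
  apply: ideal_mul_sub_complement (is_complement_sym hS SC) _.
  exact: principal_ideal_min (Ann_ideal C) rC.
have SIS : pset_sub S (ideal_mul I S).
  have [_ _ /(_ I hI) [eIS|IS0]] := simple_second sS; first by move=> x /(eIS x).
  case: rS => z Sz; apply/(IS0 (r *: z)).1.
  exact: ideal_mulZ (principal_ideal_id r) Sz.
have NIC : pset_sub N (sum_sub (ideal_mul I fullM) C).
  move=> n _; have [s' [c [Ss' Cc ->]]] := dec n; exists s', c; split=> //.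
  by apply: (ideal_mulS (N := S)) => //; apply: SIS.
case: (PS I C hI hC NIC) => [NI|NC] x; first by split=> [/LN|/NI/IMS/SL].
by case: s0; apply: SC0 => //; apply/NC/LN/SL.
Qed.

End Separation.

Theorem theorem5p17 (R : comNzRingType) (M : lmodType R) :
  semisimple M ->
  (forall N : M -> Prop, is_max_second N ->
     ~ pset_eq (Ann (@fullM R M)) (Ann_B_minus N)) ->
  [/\ (multiplication_module M <-> (forall N : M -> Prop, is_PS_hollow N -> is_simple_sub N)),
      ((forall N : M -> Prop, is_PS_hollow N -> is_simple_sub N) <->
         (forall N : M -> Prop, is_second N -> is_simple_sub N)) &
      ((forall N : M -> Prop, is_second N -> is_simple_sub N) <-> comultiplication_module M)].
Proof.
move=> ssM AnnB.
have PS_second : (forall N : M -> Prop, is_PS_hollow N -> is_simple_sub N) ->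
    forall N : M -> Prop, is_second N -> is_simple_sub N.
  by move=> P2 N /(second_PS_hollow ssM)/P2.
split; split.
- by move/(multiplication_second_simple ssM)=> P3; apply: PS_hollow_simple_of_second_simple.
- by move/PS_second=> P3; apply: multiplication_of_second_simple.
- exact: PS_second.
- by move=> P3; apply: PS_hollow_simple_of_second_simple.
- by move=> P3; apply: comultiplication_of_second_simple.
- exact: comultiplication_second_simple ssM.
Qed.
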